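(* Let $n\ge1$, $T\ge2$, let $G=([T],\mathcal{E})$ be an undirected graph with incidence matrix $D$ (any edge orientation), Laplacian $L=D^\top D$ with eigenvalues $\lambda_1\ge\cdots\ge\lambda_{T-1}\ge\lambda_T=0$, and $M=D\otimes I_n$. Let $C_t\in\mathbb{R}^{m_t\times n}$ for $t\in[T]$, $C=\mathrm{blockdiag}(C_1,\dots,C_T)$ and $O_T^\top O_T=\sum_{t=1}^T C_t^\top C_t$. Let $b_1,b_2,b_3>0$ satisfy $$\lambda_{T-1}\ge b_1,\qquad \frac{\lambda_{\min}(O_T^\top O_T)}{T}\ge b_2,\qquad 2\|C\|_2\frac{\lambda_{\max}^{1/2}(O_T^\top O_T)}{\sqrt T}\le b_3,$$ and let $\mu>0$. Then $\lambda_{\min}(\mu M^\top M+C^\top C)\ge\overline{\lambda}(\mu):=\max\{\overline{\lambda'}(\mu),\lambda_{\min}(C^\top C)\}$, where $$\overline{\lambda'}(\mu)=\begin{cases}\dfrac{b_2^2}{2(b_2^2+b_3^2)}\mu b_1, & \text{if } \mu b_1<b_2+\dfrac{b_3^2-b_2^2}{2b_2},\\[2mm] \dfrac14\Big(1-\dfrac{\mu b_1-b_2}{\sqrt{b_3^2+(\mu b_1-b_2)^2}}\Big)\mu b_1+\dfrac{b_2}{4}+\dfrac{b_2(\mu b_1-b_2)-b_3^2}{4\sqrt{b_3^2+(\mu b_1-b_2)^2}}, & \text{if } \mu b_1\ge b_2+\dfrac{b_3^2-b_2^2}{2b_2}.\end{cases}$$ In particular, if $\mu b_1\ge b_2+\frac{b_3^2}{b_2}$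 then $\overline{\lambda'}(\mu)\ge\frac{b_2}{4}$.
   Context: $\otimes$ is the Kronecker product; $\lambda_{\min},\lambda_{\max}$ denote smallest/largest eigenvalues of symmetric matrices; $\|\cdot\|_2$ is the spectral norm; $\mathrm{blockdiag}$ denotes the block-diagonal matrix with the given diagonal blocks. *)

From HB Require Import structures.
From mathcomp Require Import all_boot all_order all_algebra.
From mathcomp Require Import boolp reals.
Set Implicit Arguments. Unset Strict Implicit. Unset Printing Implicit Defensive.
Import Order.TTheory GRing.Theory Num.Theory.
Local Open Scope ring_scope.

Section Defs.
Variable R : realType.

(* For real symmetric matrices such s exists and is unique. *)
Definition is_spectrum (k : nat) (A : 'M[R]_k) (s : seq R) : Prop :=
  sorted (fun x y : R => y <= x) s /\ char_poly A = \prod_(a <- s) ('X - a%:P).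

(* the (nonincreasing) list of eigenvalues with multiplicity; [::] if the
   characteristic polynomial does not split over R (never happens for the
   symmetric matrices used below). *)
Definition spectrum (k : nat) (A : 'M[R]_k) : seq R :=
  match pselect (exists s, is_spectrum A s) with
  | left h => projT1 (cid h)
  | right _ => [::]
  end.

(* i-th largest eigenvalue, 1-indexed: eig A 1 = lambda_1 = lambda_max. *)
Definition eig (k : nat) (A : 'M[R]_k) (i : nat) : R := nth 0 (spectrum A) i.-1.
Definition lambda_max (k : nat) (A : 'M[R]_k) : R := eig A 1.
Definition lambda_min (k : nat) (A : 'M[R]_k) : R := eig A k.

Definition spec_norm (p q : nat) (A : 'M[R]_(p, q)) : R :=
  Num.sqrt (lambda_max (A^T *m A)).

Definition kron (p q r s : nat) (A : 'M[R]_(p, q)) (B : 'M[R]_(r, s))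
  : 'M[R]_(\sum_(i < p) r, \sum_(j < q) s) :=
  \mxblock_(i < p, j < q) (A i j *: B).

Definition blockdiag (T n : nat) (m : 'I_T -> nat) (Cs : forall t, 'M[R]_(m t, n))
  : 'M[R]_(\sum_(i < T) m i, \sum_(j < T) n) :=
  \mxblock_(i < T, j < T) (if i == j then Cs i else 0).

(* D : 'M_(E, T) is an incidence matrix of the simple undirected graph g
   (symmetric irreflexive relation on [T]) for some orientation of its edges:
   rows are in bijection with the edges, and row r is e_{src r} - e_{dst r}. *)
Definition is_incidence (T E : nat) (g : rel 'I_T) (D : 'M[R]_(E, T)) : Prop :=
  exists src dst : 'I_E -> 'I_T,
    (forall r, g (src r) (dst r)) /\
    (forall u v, g u v -> exists! r : 'I_E,
         (src r = u /\ dst r = v) \/ (src r = v /\ dst r = u)) /\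
    (forall r w, D r w = (w == src r)%:R - (w == dst r)%:R).

Definition lambda_bar' (b1 b2 b3 mu : R) : R :=
  let x := mu * b1 - b2 in
  let q := Num.sqrt (b3 ^+ 2 + x ^+ 2) in
  if mu * b1 < b2 + (b3 ^+ 2 - b2 ^+ 2) / (2 * b2)
  then b2 ^+ 2 / (2 * (b2 ^+ 2 + b3 ^+ 2)) * (mu * b1)
  else 4^-1 * (1 - x / q) * (mu * b1) + b2 / 4 + (b2 * x - b3 ^+ 2) / (4 * q).

Definition lambda_bar (k : nat) (b1 b2 b3 mu : R) (CtC : 'M[R]_k) : R :=
  Num.max (lambda_bar' b1 b2 b3 mu) (lambda_min CtC).

End Defs.

(* Write v = 1 (x) z + w, where z is the mean of the n-blocks of v, so that the
   blocks of w sum to zero.  M kills 1 (x) z, and every coordinate slice of w is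
   orthogonal to the kernel vector 1 of L, so |Mv|^2 = |Mw|^2 >= b1 |w|^2.  Next
   |C (1 (x) z)|^2 = z^T O_T^T O_T z >= b2 |1 (x) z|^2, while Cauchy-Schwarz and the
   b3 hypothesis bound the cross term 2 <C (1 (x) z), C w> below by
   -b3 |1 (x) z| |w|.  So the quadratic form of mu M^T M + C^T C dominates a
   binary quadratic form in a = |1 (x) z| and c = |w|, which is bounded below by
   lambda_bar'(mu) (a^2 + c^2): through its smallest eigenvalue in the second
   regime, and by interpolating with |Cv|^2 >= 0 in the first.  The bound
   lambda_min (C^T C) is immediate as M^T M is positive semidefinite.  Eigenvalue
   facts for real symmetric matrices come from the complex spectral theorem. *)

From HB Require Import structures.
From mathcomp Require Import all_boot all_order all_algebra.
From mathcomp Require Import boolp reals.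
From mathcomp Require Import complex.
From mathcomp Require Import zify ring lra.
Import Order.TTheory GRing.Theory Num.Theory.
Local Open Scope ring_scope.
Set Implicit Arguments. Unset Strict Implicit. Unset Printing Implicit Defensive.

Lemma char_poly_conj (F : comUnitRingType) k (P A : 'M[F]_k) : P \in unitmx ->
  char_poly (invmx P *m A *m P) = char_poly A.
Proof.
move=> Pu; rewrite /char_poly /char_poly_mx.
set Q := map_mx polyC P; set Qi := map_mx polyC (invmx P).
have QiQ : Qi *m Q = 1%:M by rewrite -map_mxM mulVmx // map_mx1.
have -> : 'X%:M - map_mx polyC (invmx P *m A *m P) = Qi *m ('X%:M - map_mx polyC A) *m Q.
  by rewrite mulmxBr mulmxBl mul_mx_scalar -scalemxAl QiQ scalemx1 !map_mxM.
by rewrite !det_mulmx mulrAC -det_mulmx QiQ det1 mul1r.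
Qed.

Section DotProduct.
Variable R : realFieldType.

Definition vdot k (x y : 'cV[R]_k) : R := (x^T *m y) 0 0.
Definition qform k (A : 'M[R]_k) (x : 'cV[R]_k) : R := (x^T *m A *m x) 0 0.

Lemma vdotE k (x y : 'cV[R]_k) : vdot x y = \sum_i x i 0 * y i 0.
Proof. by rewrite /vdot mxE; apply: eq_bigr => i _; rewrite mxE. Qed.

Lemma vdotC k (x y : 'cV[R]_k) : vdot x y = vdot y x.
Proof. by rewrite !vdotE; apply: eq_bigr => i _; rewrite mulrC. Qed.

Lemma vdotDr k (x y z : 'cV[R]_k) : vdot x (y + z) = vdot x y + vdot x z.
Proof. by rewrite /vdot mulmxDr mxE. Qed.

Lemma vdotDl k (x y z : 'cV[R]_k) : vdot (x + y) z = vdot x z + vdot y z.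
Proof. by rewrite vdotC vdotDr !(vdotC z). Qed.

Lemma vdotZr k a (x y : 'cV[R]_k) : vdot x (a *: y) = a * vdot x y.
Proof. by rewrite /vdot -scalemxAr mxE. Qed.

Lemma vdotZl k a (x y : 'cV[R]_k) : vdot (a *: x) y = a * vdot x y.
Proof. by rewrite vdotC vdotZr vdotC. Qed.

Lemma vdot_sumr k I (r : seq I) (F : I -> 'cV[R]_k) x :
  vdot x (\sum_(i <- r) F i) = \sum_(i <- r) vdot x (F i).
Proof. by rewrite /vdot mulmx_sumr summxE. Qed.

Lemma vdot_ge0 k (x : 'cV[R]_k) : 0 <= vdot x x.
Proof. by rewrite vdotE sumr_ge0 // => i _; rewrite -expr2 sqr_ge0. Qed.

Lemma vdot_gt0 k (x : 'cV[R]_k) : (0 < vdot x x) = (x != 0).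
Proof.
rewrite lt_def vdot_ge0 andbT vdotE psumr_eq0 => [|i _]; last by rewrite -expr2 sqr_ge0.
congr (~~ _); apply/allP/eqP => [x0|-> i _]; last by rewrite /= mxE mulr0 eqxx.
apply/matrixP => i j; rewrite ord1 !mxE.
by have := x0 i (mem_index_enum i); rewrite /= mulf_eq0 orbb => /eqP.
Qed.

Lemma qformE k (A : 'M[R]_k) x : qform A x = vdot x (A *m x).
Proof. by rewrite /qform /vdot mulmxA. Qed.

Lemma vdot_selfD k (x y : 'cV[R]_k) :
  vdot (x + y) (x + y) = vdot x x + 2 * vdot x y + vdot y y.
Proof. by rewrite vdotDl !vdotDr [vdot y x]vdotC; ring. Qed.

Lemma vdot_mxcol p (p_ : 'I_p -> nat) (u w : forall i, 'cV[R]_(p_ i)) :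
  vdot (\mxcol_i u i) (\mxcol_i w i) = \sum_i vdot (u i) (w i).
Proof. by rewrite /vdot tr_mxcol mul_mxrow_mxcol summxE. Qed.

Lemma qform_gram k l (X : 'M[R]_(l, k)) x : qform (X^T *m X) x = vdot (X *m x) (X *m x).
Proof. by rewrite /qform /vdot trmx_mul !mulmxA. Qed.

Lemma qformD k (A B : 'M[R]_k) x : qform (A + B) x = qform A x + qform B x.
Proof. by rewrite /qform mulmxDr mulmxDl mxE. Qed.

Lemma qformZ k a (A : 'M[R]_k) x : qform (a *: A) x = a * qform A x.
Proof. by rewrite /qform -scalemxAr -scalemxAl mxE. Qed.

Lemma qform_sum k I (r : seq I) (A : I -> 'M[R]_k) x :
  qform (\sum_(i <- r) A i) x = \sum_(i <- r) qform (A i) x.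
Proof. by rewrite /qform mulmx_sumr mulmx_suml summxE. Qed.

Lemma cauchy_schwarz_sqr k (x y : 'cV[R]_k) : vdot x y ^+ 2 <= vdot x x * vdot y y.
Proof.
have [->|y0] := eqVneq y 0; first by rewrite /vdot !mulmx0 !mxE expr0n /= mulr0.
have Y_gt0 : 0 < vdot y y by rewrite vdot_gt0.
have := vdot_ge0 (vdot y y *: x - vdot x y *: y).
by rewrite vdot_selfD -scaleNr !vdotZl !vdotZr; nra.
Qed.

End DotProduct.

Section Norm.
Variable R : rcfType.

Definition vnorm k (x : 'cV[R]_k) : R := Num.sqrt (vdot x x).

Lemma vnorm_ge0 k (x : 'cV[R]_k) : 0 <= vnorm x.
Proof. exact: sqrtr_ge0. Qed.

Lemma sqr_vnorm k (x : 'cV[R]_k) : vnorm x ^+ 2 = vdot x x.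
Proof. by rewrite sqr_sqrtr // vdot_ge0. Qed.

Lemma cauchy_schwarz k (x y : 'cV[R]_k) : `|vdot x y| <= vnorm x * vnorm y.
Proof.
rewrite -sqrtrM ?vdot_ge0 // -ler_sqr ?nnegrE ?sqrtr_ge0 //.
by rewrite sqr_sqrtr ?mulr_ge0 ?vdot_ge0 // real_normK ?num_real // cauchy_schwarz_sqr.
Qed.

End Norm.

Section RealSymmetric.
Variable R : realType.
Local Notation C := R[i].
Local Notation toC := (real_complex R).
Local Open Scope sesquilinear_scope.

Section Coordinates.
Variables (k : nat) (A : 'M[R]_k).
Hypothesis symA : A^T = A.

Let AC := map_mx toC A.
Let P := spectralmx AC.

(* Eigenvalues (unsorted) and coordinates in a unitary eigenbasis: the spectral
   theorem is only available over an algebraically closed field. *)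
Definition eigvals (i : 'I_k) : R := complex.Re (spectral_diag AC 0 i).
Definition eigcoords (x : 'cV[R]_k) : 'cV[C]_k := P *m map_mx toC x.

Let AC_hermitian : AC \is hermsymmx.
Proof.
apply/is_hermitianmxP; rewrite expr0 scale1r.
apply/matrixP => i j; rewrite !mxE; apply/esym.
by rewrite -[in RHS]symA mxE; exact: conjc_real.
Qed.

Let P_unitary : P \is unitarymx := spectral_unitarymx AC.

Let diag_eigvals : spectral_diag AC = \row_i toC (eigvals i).
Proof.
apply/rowP => i; rewrite mxE RRe_real //.
exact: (mxOverP (hermitian_spectral_diag_real AC_hermitian)).
Qed.

Let AC_spectral : AC = P^t* *m diag_mx (\row_i toC (eigvals i)) *m P.
Proof.
rewrite -diag_eigvals -invmx_unitary //.
exact/orthomx_spectralP/hermitian_normalmx/AC_hermitian.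
Qed.

Let eigcoords_adj x : (eigcoords x)^t* = (map_mx toC x)^T *m P^t*.
Proof.
rewrite /eigcoords trmx_mul map_mxM; congr (_ *m _).
by apply/matrixP => i j; rewrite !mxE; exact: conjc_real.
Qed.

Lemma char_poly_eigvals : char_poly A = \prod_i ('X - (eigvals i)%:P).
Proof.
apply: (map_poly_inj toC); rewrite map_char_poly -/AC AC_spectral.
rewrite -invmx_unitary // char_poly_conj ?unitarymx_unit //.
rewrite char_poly_trig ?diag_mx_is_trig // rmorph_prod; apply: eq_bigr => i _.
by rewrite rmorphB /= map_polyX map_polyC !mxE eqxx mulr1n.
Qed.

Lemma vdot_eigcoords x y :
  toC (vdot x y) = \sum_i (eigcoords x i 0)^* * eigcoords y i 0.
Proof.
have -> : toC (vdot x y) = ((eigcoords x)^t* *m eigcoords y) 0 0.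
  by rewrite eigcoords_adj mulmxA mulmxKtV // map_trmx -map_mxM mxE.
by rewrite mxE; apply: eq_bigr => i _; rewrite !mxE.
Qed.

Lemma vdot_eigcoords_self x : toC (vdot x x) = \sum_i `|eigcoords x i 0| ^+ 2.
Proof. by rewrite vdot_eigcoords; apply: eq_bigr => i _; rewrite normCKC. Qed.

Lemma qform_eigcoords x :
  toC (qform A x) = \sum_i toC (eigvals i) * `|eigcoords x i 0| ^+ 2.
Proof.
have -> : toC (qform A x) =
    ((eigcoords x)^t* *m diag_mx (\row_i toC (eigvals i)) *m eigcoords x) 0 0.
  have -> : toC (qform A x) = ((map_mx toC x)^T *m AC *m map_mx toC x) 0 0.
    by rewrite /AC map_trmx -!map_mxM mxE.
  by rewrite AC_spectral eigcoords_adj /eigcoords !mulmxA.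
rewrite mxE; apply: eq_bigr => i _; move: (eigcoords x) => y.
by rewrite mul_mx_diag !mxE normCKC mulrAC mulrC.
Qed.

Lemma eigcoords_ker e i : A *m e = 0 -> eigvals i != 0 -> eigcoords e i 0 = 0.
Proof.
move=> Ae0 ri0.
have : diag_mx (\row_i toC (eigvals i)) *m eigcoords e = 0.
  have : AC *m map_mx toC e = 0 by rewrite -map_mxM Ae0 map_mx0.
  rewrite AC_spectral -!mulmxA => /(congr1 (mulmx P)).
  by rewrite mulmx0 !mulmxA (unitarymxP P_unitary) mul1mx -mulmxA.
move=> /matrixP /(_ i 0); rewrite mul_diag_mx !mxE => /eqP.
rewrite mulf_eq0 => /orP [/eqP /complexI ri|/eqP //].
by move: ri0; rewrite ri eqxx.
Qed.

Lemma eigcoords_eq0 e : (eigcoords e == 0) = (e == 0).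
Proof.
rewrite /eigcoords; apply/idP/idP => [/eqP Pe0|/eqP ->]; last by rewrite map_mx0 mulmx0.
rewrite -(map_mx_eq0 toC) -(mulKmx (unitarymx_unit P_unitary) (map_mx toC e)).
by rewrite Pe0 mulmx0.
Qed.

End Coordinates.

Lemma spectrum_prod_XsubC k (A : 'M[R]_k) (r : 'I_k -> R) :
    char_poly A = \prod_i ('X - (r i)%:P) ->
  is_spectrum A (spectrum A) /\ perm_eq (spectrum A) [seq r i | i <- enum 'I_k].
Proof.
move=> cpA; set s := sort (fun x y : R => y <= x) [seq r i | i <- enum 'I_k].
have prodE : \prod_(a <- [seq r i | i <- enum 'I_k]) ('X - a%:P) = char_poly A.
  by rewrite big_map big_enum.
have s_spec : is_spectrum A s.
  split; first by apply: sort_sorted => x y; exact: le_total.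
  by rewrite -prodE; apply: perm_big; rewrite perm_sym perm_sort.
have spec_spec : is_spectrum A (spectrum A).
  by rewrite /spectrum; case: pselect => [h|[]]; [case: (cid h) | exists s].
by split=> //; apply: prod_XsubC_eq; rewrite prodE -spec_spec.2.
Qed.

Lemma sorted_ge_nth (s : seq R) i j : sorted (fun x y : R => y <= x) s ->
  (i <= j < size s)%N -> nth 0 s j <= nth 0 s i.
Proof.
move=> srt /andP [ij js]; apply: (sorted_leq_nth _ _ 0 srt) => //.
- by move=> y x z /= xy yz; exact: le_trans yz xy.
- by rewrite inE (leq_ltn_trans ij).
Qed.

Lemma sorted_count_lt (s : seq R) b : sorted (fun x y : R => y <= x) s ->
  b <= nth 0 s (size s).-2 -> (count (< b) s <= 1)%N.
Proof.
move=> srt hb; rewrite -(cat_take_drop (size s).-1 s) count_cat.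
have -> : count (< b) (take (size s).-1 s) = 0%N.
  rewrite (@eq_in_count _ _ pred0) ?count_pred0 // => x; case/(nthP 0) => i.
  rewrite size_take_min => lti <-; rewrite nth_take; last by lia.
  by rewrite /= ltNge (le_trans hb) // sorted_ge_nth //; lia.
rewrite add0n (leq_trans (count_size _ _)) // size_drop -subn1.
by set n := size s; clear; lia.
Qed.

Section Rayleigh.
Variables (k : nat) (A : 'M[R]_k).
Hypothesis symA : A^T = A.

Let s := spectrum A.

Let s_spectrum_perm := spectrum_prod_XsubC (char_poly_eigvals symA).

Lemma size_spectrum : size s = k.
Proof. by rewrite (perm_size s_spectrum_perm.2) size_map size_enum_ord. Qed.

Lemma sorted_spectrum : sorted (fun x y : R => y <= x) s.
Proof. exact: s_spectrum_perm.1.1. Qed.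

Lemma eigvals_bounds i : lambda_min A <= eigvals A i <= lambda_max A.
Proof.
have : eigvals A i \in s by rewrite (perm_mem s_spectrum_perm.2) map_f ?mem_enum.
move=> /[dup] si /(nthP 0) [j js <-]; rewrite size_spectrum in js.
rewrite /lambda_min /lambda_max /eig /= -/s.
by rewrite !sorted_ge_nth ?sorted_spectrum ?size_spectrum ?prednK ?leq_pred //; lia.
Qed.

Lemma qform_ge_eigcoords b x :
    (forall i, eigcoords A x i 0 != 0 -> b <= eigvals A i) ->
  b * vdot x x <= qform A x.
Proof.
move=> hb; rewrite -lecR rmorphM /= (vdot_eigcoords_self A) (qform_eigcoords symA).
rewrite mulr_sumr; apply: ler_sum => i _.
have [->|/hb bi] := eqVneq (eigcoords A x i 0) 0; first by rewrite normr0 expr0n !mulr0.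
by rewrite ler_wpM2r ?exprn_ge0 ?normr_ge0 ?lecR.
Qed.

Lemma qform_le_eigcoords b x :
    (forall i, eigcoords A x i 0 != 0 -> eigvals A i <= b) ->
  qform A x <= b * vdot x x.
Proof.
move=> hb; rewrite -lecR rmorphM /= (vdot_eigcoords_self A) (qform_eigcoords symA).
rewrite mulr_sumr; apply: ler_sum => i _.
have [->|/hb bi] := eqVneq (eigcoords A x i 0) 0; first by rewrite normr0 expr0n !mulr0.
by rewrite ler_wpM2r ?exprn_ge0 ?normr_ge0 ?lecR.
Qed.

Lemma rayleigh_min x : lambda_min A * vdot x x <= qform A x.
Proof. by apply: qform_ge_eigcoords => i _; case/andP: (eigvals_bounds i). Qed.

Lemma rayleigh_max x : qform A x <= lambda_max A * vdot x x.
Proof. by apply: qform_le_eigcoords => i _; case/andP: (eigvals_bounds i). Qed.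

Lemma lambda_min_ge c : (0 < k)%N ->
  (forall x, c * vdot x x <= qform A x) -> c <= lambda_min A.
Proof.
move=> k0 hc.
have : root (char_poly A) (lambda_min A).
  by rewrite s_spectrum_perm.1.2 root_prod_XsubC mem_nth // size_spectrum prednK.
rewrite -eigenvalue_root_char => /eigenvalueP [v vA v0].
have Av : A *m v^T = lambda_min A *: v^T by rewrite -[in LHS]symA -trmx_mul vA linearZ.
have vpos : 0 < vdot v^T v^T.
  by rewrite vdot_gt0; apply: contra v0 => /eqP /(congr1 trmx); rewrite trmxK trmx0 => ->.
by have := hc v^T; rewrite qformE Av vdotZr ler_pM2r.
Qed.

(* At most one eigenvalue lies below [b]; it is the eigenvalue 0 carried by
   [e], along which [x] has no component. *)
Lemma rayleigh_second b e x : 0 < b -> b <= nth 0 s k.-2 ->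
  A *m e = 0 -> e != 0 -> vdot x e = 0 -> b * vdot x x <= qform A x.
Proof.
move=> b0 hb Ae0 e0 xe0; apply: qform_ge_eigcoords => i xi0.
rewrite leNgt; apply/negP => low_i.
have low_uniq j : eigvals A j < b -> j = i.
  move=> low_j; apply/eqP; apply: contraTT (@sorted_count_lt s b sorted_spectrum _) => [ji|].
    rewrite -ltnNge (permP s_spectrum_perm.2) count_map -size_filter.
    apply: (@uniq_leq_size _ [:: j; i]); first by rewrite /= inE ji.
    by move=> a; rewrite !inE mem_filter mem_enum andbT => /orP [] /eqP ->.
  by rewrite size_spectrum.
have e_supp j : j != i -> eigcoords A e j 0 = 0.
  move=> ji; apply: (eigcoords_ker symA) Ae0 _.
  by rewrite gt_eqF // (lt_le_trans b0) // leNgt; apply: contra ji => /low_uniq ->.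
have ei0 : eigcoords A e i 0 != 0.
  apply: contra e0 => /eqP ei0; rewrite -(eigcoords_eq0 A); apply/eqP/matrixP => j l.
  by rewrite [l]ord1 [RHS]mxE; case: (eqVneq j i) => [->|/e_supp ->].
have := vdot_eigcoords A x e; rewrite xe0 (bigD1 i) //= big1 => [|j /e_supp ->]; last first.
  by rewrite mulr0.
by move/esym/eqP; rewrite addr0 mulf_eq0 (negPf ei0) conjC_eq0 orbF (negPf xi0).
Qed.

End Rayleigh.

End RealSymmetric.

Lemma gram_sym (R : comPzRingType) k l (X : 'M[R]_(l, k)) : (X^T *m X)^T = X^T *m X.
Proof. by rewrite trmx_mul trmxK. Qed.

Section SpectralNorm.
Variable R : realType.

Lemma sqrt_qform_le k (A : 'M[R]_k) x : A^T = A ->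
  Num.sqrt (qform A x) <= Num.sqrt (lambda_max A) * vnorm x.
Proof.
move=> symA; rewrite /vnorm mulrC -sqrtrM ?vdot_ge0 //.
by rewrite ler_wsqrtr // mulrC rayleigh_max.
Qed.

Lemma vnorm_mulmx_le k l (X : 'M[R]_(l, k)) x : vnorm (X *m x) <= spec_norm X * vnorm x.
Proof. by rewrite /vnorm -qform_gram sqrt_qform_le ?gram_sym. Qed.

End SpectralNorm.

Section BinaryQuadraticForms.
Variable R : rcfType.

Lemma quadratic_form_ge0 (al be ga a c : R) : 0 < al -> be ^+ 2 <= 4 * al * ga ->
  0 <= al * a ^+ 2 - be * a * c + ga * c ^+ 2.
Proof.
move=> al0 disc; rewrite -(pmulr_rge0 _ (_ : 0 < 4 * al)) ?mulr_gt0 //.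
have -> : 4 * al * (al * a ^+ 2 - be * a * c + ga * c ^+ 2) =
    (2 * al * a - be * c) ^+ 2 + (4 * al * ga - be ^+ 2) * c ^+ 2 by ring.
by rewrite addr_ge0 ?sqr_ge0 // mulr_ge0 ?sqr_ge0 ?subr_ge0.
Qed.

(* The left-hand factor is the smallest eigenvalue of [[al, -be/2], [-be/2, ga]]. *)
Lemma quadratic_form_ge_min_eig (al be ga a c : R) : 0 < be ->
  (al + ga - Num.sqrt (be ^+ 2 + (ga - al) ^+ 2)) / 2 * (a ^+ 2 + c ^+ 2)
    <= al * a ^+ 2 - be * a * c + ga * c ^+ 2.
Proof.
move=> be0; set q := Num.sqrt _.
have q2 : q ^+ 2 = be ^+ 2 + (ga - al) ^+ 2 by rewrite sqr_sqrtr ?addr_ge0 ?sqr_ge0.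
have q_gt : `|ga - al| < q.
  have := exprn_gt0 2 be0; have := sqr_ge0 (ga - al) => ? ?.
  by rewrite -sqrtr_sqr ltr_sqrt; lra.
have [lt_al lt_ga] : ga - al < q /\ al - ga < q.
  by split; apply: le_lt_trans q_gt; [|rewrite distrC]; exact: ler_norm.
rewrite -subr_ge0.
have -> : al * a ^+ 2 - be * a * c + ga * c ^+ 2 - (al + ga - q) / 2 * (a ^+ 2 + c ^+ 2)
    = (al - ga + q) / 2 * a ^+ 2 - be * a * c + (ga - al + q) / 2 * c ^+ 2 by field.
apply: quadratic_form_ge0; first by rewrite divr_gt0 //; lra.
have -> : 4 * ((al - ga + q) / 2) * ((ga - al + q) / 2) = q ^+ 2 - (ga - al) ^+ 2 by field.
by rewrite q2 addrK.
Qed.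

End BinaryQuadraticForms.

Section LambdaBar.
Variables (R : realType) (b1 b2 b3 mu : R).
Hypotheses (b1_gt0 : 0 < b1) (b2_gt0 : 0 < b2) (b3_gt0 : 0 < b3) (mu_gt0 : 0 < mu).

(* Half the smallest eigenvalue of [[b2, -b3/2], [-b3/2, mu b1]]. *)
Lemma lambda_bar'_large : ~~ (mu * b1 < b2 + (b3 ^+ 2 - b2 ^+ 2) / (2 * b2)) ->
  lambda_bar' b1 b2 b3 mu
    = (b2 + mu * b1 - Num.sqrt (b3 ^+ 2 + (mu * b1 - b2) ^+ 2)) / 4.
Proof.
rewrite /lambda_bar' => /negPf ->.
set x := mu * b1 - b2; set q := Num.sqrt (b3 ^+ 2 + x ^+ 2).
have q2 : q ^+ 2 = b3 ^+ 2 + x ^+ 2 by rewrite sqr_sqrtr ?addr_ge0 ?sqr_ge0.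
have q0 : q != 0 by rewrite gt_eqF // sqrtr_gt0 ltr_pwDl ?sqr_ge0 ?exprn_gt0.
apply/eqP; rewrite -subr_eq0; apply/eqP.
have -> : 4^-1 * (1 - x / q) * (mu * b1) + b2 / 4 + (b2 * x - b3 ^+ 2) / (4 * q)
    - (b2 + mu * b1 - q) / 4 = (q ^+ 2 - b3 ^+ 2 - x ^+ 2) / (4 * q) by rewrite /x; field.
by rewrite q2 (_ : b3 ^+ 2 + x ^+ 2 - b3 ^+ 2 - x ^+ 2 = 0) ?mul0r //; ring.
Qed.

(* With la := mu b1 b2 / (b2^2 + b3^2) <= 1, interpolate
   S >= la (b2 a^2 - b3 a c) and complete the square. *)
Lemma lambda_bar'_small_le (a c S : R) :
    mu * b1 < b2 + (b3 ^+ 2 - b2 ^+ 2) / (2 * b2) ->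
    0 <= S -> b2 * a ^+ 2 - b3 * a * c <= S ->
  lambda_bar' b1 b2 b3 mu * (a ^+ 2 + c ^+ 2) <= mu * b1 * c ^+ 2 + S.
Proof.
rewrite /lambda_bar' => small; rewrite small => S0 hS.
set y := mu * b1 in small *; set D := b2 ^+ 2 + b3 ^+ 2.
have D0 : 0 < D by rewrite addr_gt0 ?exprn_gt0.
have y0 : 0 < y by rewrite mulr_gt0.
have {}small : 2 * (y * b2) < D.
  move: small; rewrite (_ : b2 + _ = D / (2 * b2)); last by rewrite /D; field; rewrite gt_eqF.
  by rewrite ltr_pdivlMr ?mulr_gt0 //; lra.
pose la := y * b2 / D.
have la0 : 0 < la by rewrite divr_gt0 ?mulr_gt0.
have la1 : la <= 1 by rewrite ler_pdivrMr // mul1r; nra.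
have -> : b2 ^+ 2 / (2 * D) * y = la * b2 / 2 by rewrite /la; field; rewrite gt_eqF.
have hq : la * b2 / 2 * (a ^+ 2 + c ^+ 2) <= la * (b2 * a ^+ 2 - b3 * a * c) + y * c ^+ 2.
  rewrite -subr_ge0.
  have -> : la * (b2 * a ^+ 2 - b3 * a * c) + y * c ^+ 2 - la * b2 / 2 * (a ^+ 2 + c ^+ 2)
      = la * b2 / 2 * a ^+ 2 - la * b3 * a * c + (y - la * b2 / 2) * c ^+ 2 by field.
  apply: quadratic_form_ge0; first by have := mulr_gt0 la0 b2_gt0; lra.
  rewrite -subr_ge0.
  have -> : 4 * (la * b2 / 2) * (y - la * b2 / 2) - (la * b3) ^+ 2 = la * (2 * b2 * y - la * D).
    by rewrite /D; field.
  have -> : la * D = y * b2 by rewrite /la; field; rewrite gt_eqF.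
  by rewrite mulr_ge0 ?(ltW la0) //; have := mulr_gt0 y0 b2_gt0; lra.
nra.
Qed.

Lemma lambda_bar'_large_le (a c S : R) :
    ~~ (mu * b1 < b2 + (b3 ^+ 2 - b2 ^+ 2) / (2 * b2)) ->
    0 <= S -> b2 * a ^+ 2 - b3 * a * c <= S ->
  lambda_bar' b1 b2 b3 mu * (a ^+ 2 + c ^+ 2) <= mu * b1 * c ^+ 2 + S.
Proof.
move=> /lambda_bar'_large -> S0 hS.
have := quadratic_form_ge_min_eig b2 (mu * b1) a c b3_gt0.
set m := b2 + mu * b1 - _ => hm.
have := sqr_ge0 a; have := sqr_ge0 c; have : 0 < mu * b1 by rewrite mulr_gt0.
by case: (lerP 0 m) => ?; nra.
Qed.

Lemma lambda_bar'_le (a c L S : R) :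
    b1 * c ^+ 2 <= L -> 0 <= S -> b2 * a ^+ 2 - b3 * a * c <= S ->
  lambda_bar' b1 b2 b3 mu * (a ^+ 2 + c ^+ 2) <= mu * L + S.
Proof.
move=> hL S0 hS; have : mu * b1 * c ^+ 2 <= mu * L by rewrite -mulrA ler_pM2l.
have [small|large] := boolP (mu * b1 < b2 + (b3 ^+ 2 - b2 ^+ 2) / (2 * b2)).
- by have := lambda_bar'_small_le small S0 hS; lra.
- by have := lambda_bar'_large_le large S0 hS; lra.
Qed.

Lemma lambda_bar'_ge_quarter : b2 + b3 ^+ 2 / b2 <= mu * b1 ->
  b2 / 4 <= lambda_bar' b1 b2 b3 mu.
Proof.
set y := mu * b1 => hy; have y0 : 0 < y by rewrite mulr_gt0.
have yb2 := mulr_gt0 y0 b2_gt0.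
have yb : b2 ^+ 2 + b3 ^+ 2 <= y * b2.
  move: hy; rewrite -(ler_pM2r b2_gt0) mulrDl divfK ?gt_eqF //; nra.
rewrite lambda_bar'_large -/y; last first.
  rewrite -/y -leNgt (_ : b2 + _ = (b2 ^+ 2 + b3 ^+ 2) / (2 * b2)); last by field; rewrite gt_eqF.
  by rewrite ler_pdivrMr ?mulr_gt0 //; lra.
suff : Num.sqrt (b3 ^+ 2 + (y - b2) ^+ 2) <= y by lra.
by rewrite -[leRHS](ger0_norm (ltW y0)) -sqrtr_sqr ler_wsqrtr //; nra.
Qed.

End LambdaBar.

Section BlockMatrices.
Variable R : realType.

Lemma incidence_row_sum0 T E (g : rel 'I_T) (D : 'M[R]_(E, T)) :
  is_incidence g D -> forall i, \sum_j D i j = 0.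
Proof.
move=> [src [dst [_ [_ hD]]]] i; under eq_bigr do rewrite hD.
have ind a : \sum_j ((j == a)%:R : R) = 1.
  by rewrite (bigD1 a) //= eqxx big1 ?addr0 // => j /negPf ->.
by rewrite sumrB !ind subrr.
Qed.

Lemma kron_mxcol p q n (D : 'M[R]_(p, q)) (v : 'I_q -> 'cV[R]_n) :
  kron D (1%:M : 'M[R]_n) *m \mxcol_j v j = \mxcol_i \sum_j D i j *: v j.
Proof.
rewrite /kron mul_mxblock_mxrow; apply: eq_mxcol => i; apply: eq_bigr => j _.
by rewrite -scalemxAl mul1mx.
Qed.

Lemma blockdiag_mxcol T n (m : 'I_T -> nat) (Cs : forall t, 'M[R]_(m t, n))
    (v : 'I_T -> 'cV[R]_n) :
  blockdiag Cs *m \mxcol_j v j = \mxcol_i (Cs i *m v i).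
Proof.
rewrite /blockdiag mul_mxblock_mxrow; apply: eq_mxcol => i.
rewrite (bigD1 i) //= eqxx big1 ?addr0 // => j /negPf; rewrite eq_sym => ->.
by rewrite mul0mx.
Qed.

Definition const_mxcol T n (z : 'cV[R]_n) : 'cV[R]_(\sum_(j < T) n) := \mxcol_(j < T) z.

Lemma mxcol_mean_decomposition T n (v : 'cV[R]_(\sum_(j < T) n)) : (0 < T)%N ->
  exists (z : 'cV[R]_n) (w : 'I_T -> 'cV[R]_n),
    \sum_j w j = 0 /\ v = const_mxcol T z + \mxcol_j w j.
Proof.
move=> T_gt0; pose z := T%:R^-1 *: \sum_j submxcol v j.
exists z, (fun j => submxcol v j - z); split.
  rewrite sumrB sumr_const card_ord /z -scaler_nat scalerA mulfV ?scale1r ?subrr //.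
  by rewrite pnatr_eq0 -lt0n.
by rewrite -[LHS]submxcolK -mxcolD; apply: eq_mxcol => j; rewrite addrC subrK.
Qed.

Lemma laplacian_rayleigh_second T E (D : 'M[R]_(E, T)) (b : R) (x : 'cV[R]_T) :
    (0 < T)%N -> 0 < b -> b <= nth 0 (spectrum (D^T *m D)) T.-2 ->
    (forall i, \sum_j D i j = 0) -> \sum_j x j 0 = 0 ->
  b * vdot x x <= vdot (D *m x) (D *m x).
Proof.
move=> T_gt0 b_gt0 hb D_row0 x_sum0; rewrite -qform_gram.
apply: (rayleigh_second (gram_sym D) b_gt0 hb (e := const_mx 1)).
- rewrite -mulmxA (_ : D *m const_mx 1 = 0) ?mulmx0 //.
  apply/matrixP => i j; rewrite !mxE -[RHS](D_row0 i).
  by apply: eq_bigr => k _; rewrite mxE mulr1.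
- apply/negP => /eqP /matrixP /(_ (Ordinal T_gt0) 0) /eqP; rewrite !mxE.
  exact/negP/oner_neq0.
- by rewrite vdotE -[RHS]x_sum0; apply: eq_bigr => j _; rewrite mxE mulr1.
Qed.

Lemma kron_laplacian_bound T E n (D : 'M[R]_(E, T)) (b : R) (w : 'I_T -> 'cV[R]_n) :
    (0 < T)%N -> 0 < b -> b <= nth 0 (spectrum (D^T *m D)) T.-2 ->
    (forall i, \sum_j D i j = 0) -> \sum_j w j = 0 ->
  b * vdot (\mxcol_j w j) (\mxcol_j w j)
    <= vdot (kron D 1%:M *m \mxcol_j w j) (kron D 1%:M *m \mxcol_j w j).
Proof.
move=> T_gt0 b_gt0 hb D_row0 w_sum0.
pose x l : 'cV[R]_T := \col_j w j l 0.
have normE : vdot (\mxcol_j w j) (\mxcol_j w j) = \sum_l vdot (x l) (x l).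
  rewrite vdot_mxcol; under eq_bigr do rewrite vdotE.
  rewrite exchange_big; apply: eq_bigr => l _; rewrite vdotE.
  by apply: eq_bigr => j _; rewrite mxE.
have MnormE : vdot (kron D 1%:M *m \mxcol_j w j) (kron D 1%:M *m \mxcol_j w j)
    = \sum_l vdot (D *m x l) (D *m x l).
  rewrite kron_mxcol vdot_mxcol; under eq_bigr do rewrite vdotE.
  rewrite exchange_big; apply: eq_bigr => l _; rewrite vdotE; apply: eq_bigr => i _.
  by rewrite !summxE !mxE; congr (_ * _); apply: eq_bigr => j _; rewrite !mxE.
rewrite normE MnormE mulr_sumr; apply: ler_sum => l _.
apply: laplacian_rayleigh_second => //.
rewrite (_ : \sum_j x l j 0 = (\sum_j w j) l 0); first by rewrite w_sum0 mxE.
by rewrite summxE; apply: eq_bigr => j _; rewrite mxE.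
Qed.

End BlockMatrices.

Section ConsensusBound.
Variables (R : realType) (n T E : nat) (D : 'M[R]_(E, T)).
Variables (m : 'I_T -> nat) (Cs : forall t : 'I_T, 'M[R]_(m t, n)) (b1 b2 b3 mu : R).
Hypotheses (T_gt1 : (1 < T)%N) (D_row0 : forall i, \sum_j D i j = 0).
Hypotheses (b1_gt0 : 0 < b1) (b2_gt0 : 0 < b2) (b3_gt0 : 0 < b3) (mu_gt0 : 0 < mu).

Local Notation M := (kron D (1%:M : 'M[R]_n)).
Local Notation C := (blockdiag Cs).
Local Notation OTO := (\sum_(t < T) (Cs t)^T *m Cs t).

Hypothesis hb1 : b1 <= nth 0 (spectrum (D^T *m D)) T.-2.
Hypothesis hb2 : b2 <= lambda_min OTO / T%:R.
Hypothesis hb3 : 2 * spec_norm C * Num.sqrt (lambda_max OTO) / Num.sqrt T%:R <= b3.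

Let T_gt0 : (0 < T)%N. Proof. exact: ltnW. Qed.
Let T_pos : 0 < T%:R :> R. Proof. by rewrite ltr0n. Qed.

Let OTO_sym : OTO^T = OTO.
Proof. by rewrite linear_sum /=; apply: eq_bigr => t _; rewrite gram_sym. Qed.

Lemma vdot_blockdiag_const (z : 'cV[R]_n) :
  vdot (C *m const_mxcol T z) (C *m const_mxcol T z) = qform OTO z.
Proof.
rewrite blockdiag_mxcol vdot_mxcol qform_sum; apply: eq_bigr => t _.
by rewrite qform_gram.
Qed.

Lemma vnorm_const_mxcol (z : 'cV[R]_n) :
  vnorm (const_mxcol T z) = Num.sqrt T%:R * vnorm z.
Proof.
by rewrite /vnorm vdot_mxcol sumr_const card_ord -[_ *+ T]mulr_natl sqrtrM ?ler0n.
Qed.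

Lemma consensus_cross_bound (z : 'cV[R]_n) (w : 'cV[R]_(\sum_(j < T) n)) :
  b2 * vnorm (const_mxcol T z) ^+ 2 - b3 * vnorm (const_mxcol T z) * vnorm w
    <= vdot (C *m (const_mxcol T z + w)) (C *m (const_mxcol T z + w)).
Proof.
set u := const_mxcol T z; rewrite mulmxDr vdot_selfD.
have Cu_ge : b2 * vnorm u ^+ 2 <= vdot (C *m u) (C *m u).
  rewrite vdot_blockdiag_const vnorm_const_mxcol exprMn sqr_sqrtr ?ler0n // sqr_vnorm.
  apply: le_trans (rayleigh_min OTO_sym z); rewrite mulrA ler_wpM2r ?vdot_ge0 //.
  by rewrite -ler_pdivlMr.
have cross_le : 2 * `|vdot (C *m u) (C *m w)| <= b3 * vnorm u * vnorm w.
  have Cu_le : vnorm (C *m u) <= Num.sqrt (lambda_max OTO) * vnorm z.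
    by rewrite /vnorm vdot_blockdiag_const sqrt_qform_le.
  apply: le_trans (_ : 2 * (Num.sqrt (lambda_max OTO) * vnorm z * (spec_norm C * vnorm w)) <= _).
    rewrite ler_pM2l // (le_trans (cauchy_schwarz _ _)) //.
    by rewrite ler_pM ?vnorm_ge0 ?vnorm_mulmx_le.
  have sT_gt0 : 0 < Num.sqrt T%:R :> R by rewrite sqrtr_gt0.
  rewrite vnorm_const_mxcol -[leRHS]mulrA.
  have -> : 2 * (Num.sqrt (lambda_max OTO) * vnorm z * (spec_norm C * vnorm w))
      = 2 * spec_norm C * Num.sqrt (lambda_max OTO) / Num.sqrt T%:R
        * (Num.sqrt T%:R * vnorm z * vnorm w) by field; rewrite gt_eqF.
  by rewrite ler_wpM2r ?mulr_ge0 ?vnorm_ge0 ?sqrtr_ge0.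
have := ler_norm (- vdot (C *m u) (C *m w)); rewrite normrN.
have := vdot_ge0 (C *m w); lra.
Qed.

Lemma qform_ge_lambda_bar' v :
  lambda_bar' b1 b2 b3 mu * vdot v v <= qform (mu *: (M^T *m M) + C^T *m C) v.
Proof.
have [z [w [w_sum0 ->]]] := mxcol_mean_decomposition v T_gt0.
set u := const_mxcol T z; set wv := \mxcol_j w j.
have uwv0 : vdot u wv = 0.
  by rewrite vdot_mxcol -vdot_sumr w_sum0 /vdot mulmx0 mxE.
have Mu0 : M *m u = 0.
  rewrite kron_mxcol -[RHS](mxcol0 _); apply: eq_mxcol => i.
  by rewrite -scaler_suml D_row0 scale0r.
rewrite vdot_selfD uwv0 mulr0 addr0 -!sqr_vnorm qformD qformZ !qform_gram.
rewrite mulmxDr Mu0 add0r; apply: lambda_bar'_le => //; last exact: consensus_cross_bound.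
- by rewrite sqr_vnorm; apply: kron_laplacian_bound.
- exact: vdot_ge0.
Qed.

End ConsensusBound.

Theorem lemma1 (R : realType) (n T E : nat) (g : rel 'I_T)
  (D : 'M[R]_(E, T)) (m : 'I_T -> nat) (Cs : forall t : 'I_T, 'M[R]_(m t, n))
  (b1 b2 b3 mu : R) :
  (1 <= n)%N -> (2 <= T)%N ->
  symmetric g -> irreflexive g ->
  is_incidence g D ->
  0 < b1 -> 0 < b2 -> 0 < b3 -> 0 < mu ->
  let L := D^T *m D in
  let M := kron D (1%:M : 'M[R]_n) in
  let C := blockdiag Cs in
  let OTO := \sum_(t < T) ((Cs t)^T *m Cs t) in
  eig L T.-1 >= b1 ->
  lambda_min OTO / T%:R >= b2 ->
  2 * spec_norm C * Num.sqrt (lambda_max OTO) / Num.sqrt T%:R <= b3 ->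
  lambda_min (mu *: (M^T *m M) + C^T *m C) >= lambda_bar b1 b2 b3 mu (C^T *m C)
  /\ (mu * b1 >= b2 + b3 ^+ 2 / b2 -> lambda_bar' b1 b2 b3 mu >= b2 / 4).
Proof.
move=> n_gt0 T_gt1 _ _ /incidence_row_sum0 D_row0 b1_gt0 b2_gt0 b3_gt0 mu_gt0.
move=> L M C OTO hb1 hb2 hb3; split; last exact: lambda_bar'_ge_quarter.
have K_sym : (mu *: (M^T *m M) + C^T *m C)^T = mu *: (M^T *m M) + C^T *m C.
  by rewrite linearD linearZ /= !gram_sym.
have N_gt0 : (0 < \sum_(j < T) n)%N by rewrite sum_nat_const card_ord muln_gt0 n_gt0 ltnW.
rewrite /lambda_bar ge_max; apply/andP; split; apply: (lambda_min_ge K_sym N_gt0) => v.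
- exact: qform_ge_lambda_bar'.
- rewrite qformD qformZ -[X in X <= _]add0r lerD ?rayleigh_min ?gram_sym //.
  by rewrite qform_gram mulr_ge0 ?vdot_ge0 ?ltW.
Qed.
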